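(* Let $I=[x_0,x_N]$ with partition $x_0<x_1<\dots<x_N$, and for $i\in\{1,\dots,N\}$ let $I_i=[x_{i-1},x_i]$, $a_i=\frac{x_i-x_{i-1}}{x_N-x_0}$, $l_i(x)=a_ix+\frac{x_Nx_{i-1}-x_0x_i}{x_N-x_0}$ (so $l_i:I\to I_i$ is an affine bijection) and $Q_i=l_i^{-1}:I_i\to I$. Let $0<d\le 1$ and $f\in Lip_d(I)$. For $r\in\mathbb{N}$ let $b_r\in Lip_{d,f}(I)$ with $\|b\|_d:=\sup_{r\in\mathbb{N}}\|b_r\|_d<\infty$, and let $\alpha_{i,r}\in Lip_d(I)$ ($i=1,\dots,N$, $r\in\mathbb{N}$) satisfy $\max_{1\le i\le N}\frac{\|\alpha_{i,r}\|_d}{a_i^d}<\frac12$ for each $r$. Define $T^{\alpha_r}$ on $Lip_{d,f}(I)$ by $$(T^{\alpha_r}g)(x)=f(x)+\alpha_{i,r}(Q_i(x))\,g(Q_i(x))-\alpha_{i,r}(Q_i(x))\,b_r(Q_i(x)),\qquad x\in I_i,\ i=1,\dots,N.$$ Then: (1) $T^{\alpha_r}$ is well defined as a map $Lip_{d,f}(I)\to Lip_{d,f}(I)$; (2) $T^{\alpha_r}:Lip_{d,f}(I)\to Lip_{d,f}(I)$ is a contraction with respect to $\|\cdot\|_d$; (3) there exists a unique function $f^\alpha_{b,Lip_d}\in Lip_{d,f}(I)$ such that for every $g\in Lip_{d,f}(I)$ the sequence $T^{\alpha_1}\circ T^{\alpha_2}\circ\cdots\circ T^{\alpha_r}g$ converges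 (as $r\to\infty$) to $f^\alpha_{b,Lip_d}$.
   Context: For $g:I\to\mathbb{R}$ and $0<d\le1$, $Lip_d(g)=\sup\{|g(x)-g(y)|/|x-y|^d: x,y\in I, x\ne y\}$; $Lip_d(I)=\{g:I\to\mathbb{R}: Lip_d(g)<\infty\}$ with norm $\|g\|_d=\max\{\|g\|_\infty, Lip_d(g)\}$, a Banach space. $Lip_{d,f}(I)=\{g\in Lip_d(I): g(x_0)=f(x_0),\ g(x_N)=f(x_N)\}$, a closed subspace. Convergence in (3) is with respect to $\|\cdot\|_d$. *)

From Stdlib Require Import Reals Lra.
From Coquelicot Require Import Coquelicot.
Open Scope R_scope.

Definition inI (u v x : R) : Prop := u <= x <= v.

Definition lip_quot (d u v : R) (g : R -> R) (z : R) : Prop :=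
  exists x y, inI u v x /\ inI u v y /\ x <> y /\
    z = Rabs (g x - g y) / Rpower (Rabs (x - y)) d.

Definition Lipd_sn (d u v : R) (g : R -> R) : R := real (Lub_Rbar (lip_quot d u v g)).

Definition in_Lipd (d u v : R) (g : R -> R) : Prop :=
  exists M, forall z, lip_quot d u v g z -> z <= M.

Definition sup_norm (u v : R) (g : R -> R) : R :=
  real (Lub_Rbar (fun z => exists x, inI u v x /\ z = Rabs (g x))).

Definition normd (d u v : R) (g : R -> R) : R :=
  Rmax (sup_norm u v g) (Lipd_sn d u v g).

Definition in_Lipdf (d u v : R) (f g : R -> R) : Prop :=
  in_Lipd d u v g /\ g u = f u /\ g v = f v.

Definition a_coef (xs : nat -> R) (N i : nat) : R :=
  (xs i - xs (i - 1)%nat) / (xs N - xs 0%nat).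

Definition l_map (xs : nat -> R) (N i : nat) (x : R) : R :=
  a_coef xs N i * x + (xs N * xs (i - 1)%nat - xs 0%nat * xs i) / (xs N - xs 0%nat).

Definition Q_map (xs : nat -> R) (N i : nat) (x : R) : R :=
  (x - (xs N * xs (i - 1)%nat - xs 0%nat * xs i) / (xs N - xs 0%nat)) / a_coef xs N i.

Definition T_branch (xs : nat -> R) (N : nat) (f : R -> R) (alpha : nat -> R -> R)
  (b : R -> R) (g : R -> R) (i : nat) (x : R) : R :=
  f x + alpha i (Q_map xs N i x) * g (Q_map xs N i x)
      - alpha i (Q_map xs N i x) * b (Q_map xs N i x).

(* least i in {1,...,N} with x <= xs i (and N if there is none) *)
Fixpoint pick_aux (xs : nat -> R) (x : R) (i n : nat) : nat :=
  match n with
  | O => i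
  | S n' => if Rle_dec x (xs i) then i else pick_aux xs x (S i) n'
  end.

Definition pick_index (xs : nat -> R) (N : nat) (x : R) : nat :=
  pick_aux xs x 1 (N - 1).

(* T^{alpha_r} g, defined on I_i by the i-th branch (choosing the least such i
   at the partition points; part (1) of the theorem says the choice is irrelevant). *)
Definition T_op (xs : nat -> R) (N : nat) (f : R -> R) (alpha : nat -> R -> R)
  (b : R -> R) (g : R -> R) : R -> R :=
  fun x => T_branch xs N f alpha b g (pick_index xs N x) x.

(* T^{alpha_1} o T^{alpha_2} o ... o T^{alpha_r} (sequences indexed from 0:
   Tcomp r g = T_0 (T_1 ( ... (T_{r-1} g)))) *)
Fixpoint Tcomp (Tr : nat -> (R -> R) -> (R -> R)) (r : nat) (g : R -> R) : R -> R :=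
  match r with
  | O => g
  | S r' => Tcomp Tr r' (Tr r' g)
  end.

(* On the piece [I_i], [T g - T h] is [(alpha_i o Q_i) * ((g - h) o Q_i)], where [g - h]
   vanishes at both ends of [I].  Composing with [Q_i] multiplies Hölder quotients by
   [a_i ^ -d], which the hypothesis [||alpha_i||_d < a_i ^ d / 2] pays for; two points in
   different pieces are compared through the piece ends, where the product vanishes.  This
   makes each [T^{alpha_r}] a contraction for [||.||_d].  Those constants need not stay
   uniformly below 1 as [r] varies, but every [T^{alpha_r}] contracts the equivalent norm
   [2 ||.||_oo + Lip_d] by the fixed factor [max (3/4, (1 + 2^-d) / 2)].  Hence the forward
   compositions [T^{alpha_1} o ... o T^{alpha_r} g] converge geometrically, to a limit that
   does not depend on [g]. *)

From Stdlib Require Import Reals Lra Lia.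
From Coquelicot Require Import Coquelicot.
Open Scope R_scope.

Lemma Rpower_gt0 x y : 0 < Rpower x y.
Proof. apply exp_pos. Qed.

Lemma Rpower_le_1 a d : 0 < a <= 1 -> 0 <= d -> Rpower a d <= 1.
Proof.
  intros Ha Hd. assert (E : Rpower 1 d = 1).
  { unfold Rpower. rewrite ln_1, Rmult_0_r. apply exp_0. }
  rewrite <- E. apply Rle_Rpower_l; lra.
Qed.

Lemma Rpower_half_lt_1 d : 0 < d -> Rpower (/ 2) d < 1.
Proof.
  intros Hd. unfold Rpower. rewrite <- exp_0. apply exp_increasing.
  assert (ln (/ 2) < 0) by (rewrite <- ln_1; apply ln_increasing; lra). nra.
Qed.

Lemma real_Lub_Rbar_le (E : R -> Prop) K :
  0 <= K -> (forall z, E z -> z <= K) -> real (Lub_Rbar E) <= K.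
Proof.
  intros HK H. destruct (Lub_Rbar_correct E) as [_ Hlub].
  specialize (Hlub (Finite K) H).
  destruct (Lub_Rbar E); simpl in *; [exact Hlub | contradiction | lra].
Qed.

Lemma le_real_Lub_Rbar (E : R -> Prop) z M :
  E z -> (forall z, E z -> z <= M) -> z <= real (Lub_Rbar E).
Proof.
  intros Hz H. destruct (Lub_Rbar_correct E) as [Hub Hlub].
  specialize (Hlub (Finite M) H). specialize (Hub z Hz).
  destruct (Lub_Rbar E); simpl in *; [exact Hub | contradiction | contradiction].
Qed.

(** * Hölder bounds *)

Definition sup_bounded (u v M : R) (h : R -> R) : Prop :=
  forall x, inI u v x -> Rabs (h x) <= M.

Definition holder (d u v L : R) (h : R -> R) : Prop :=
  forall x y, inI u v x -> inI u v y -> x <> y ->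
    Rabs (h x - h y) <= L * Rpower (Rabs (x - y)) d.

Section HolderBounds.

Variables d u v : R.

Lemma lip_quot_le_of_holder L h z : holder d u v L h -> lip_quot d u v h z -> z <= L.
Proof.
  intros Hh [x [y [Hx [Hy [Hxy ->]]]]].
  apply Rle_div_l; [apply Rpower_gt0 | auto].
Qed.

Lemma holder_in_Lipd L h : holder d u v L h -> in_Lipd d u v h.
Proof. intros Hh. exists L. intros z. apply lip_quot_le_of_holder, Hh. Qed.

Lemma normd_le_of_bounds K h :
  0 <= K -> sup_bounded u v K h -> holder d u v K h -> normd d u v h <= K.
Proof.
  intros HK Hs Hh. apply Rmax_lub; apply real_Lub_Rbar_le; auto.
  - intros z [x [Hx ->]]. auto.
  - intros z. apply lip_quot_le_of_holder, Hh.
Qed.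

Lemma in_Lipd_holder h : in_Lipd d u v h -> holder d u v (normd d u v h) h.
Proof.
  intros [M HM] x y Hx Hy Hxy.
  apply Rle_div_l; [apply Rpower_gt0 |].
  apply Rle_trans with (Lipd_sn d u v h); [| apply Rmax_r].
  apply (le_real_Lub_Rbar _ _ M); auto. exists x, y. auto.
Qed.

Hypotheses (Huv : u <= v) (Hd : 0 < d).

Lemma in_Lipd_bounded h : in_Lipd d u v h -> exists K, sup_bounded u v K h.
Proof.
  intros [M HM]. exists (Rabs (h u) + Rabs M * Rpower (v - u + 1) d). intros x Hx.
  assert (Hpos : 0 <= Rabs M * Rpower (v - u + 1) d).
  { apply Rmult_le_pos; [apply Rabs_pos | left; apply Rpower_gt0]. }
  destruct (Req_dec x u) as [-> | Hxu]; [lra |].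
  assert (Hdist : Rpower (Rabs (x - u)) d <= Rpower (v - u + 1) d).
  { unfold inI in Hx. apply Rle_Rpower_l; [lra |].
    split; [apply Rabs_pos_lt; lra | rewrite Rabs_right; lra]. }
  assert (Hq : Rabs (h x - h u) <= M * Rpower (Rabs (x - u)) d).
  { apply Rle_div_l; [apply Rpower_gt0 |]. apply HM. exists x, u.
    unfold inI in *. repeat split; auto; lra. }
  assert (M * Rpower (Rabs (x - u)) d <= Rabs M * Rpower (v - u + 1) d).
  { apply Rle_trans with (Rabs M * Rpower (Rabs (x - u)) d).
    - apply Rmult_le_compat_r; [left; apply Rpower_gt0 | apply Rle_abs].
    - apply Rmult_le_compat_l; [apply Rabs_pos | exact Hdist]. }
  assert (Rabs (h x) <= Rabs (h u) + Rabs (h x - h u)).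
  { replace (h x) with (h u + (h x - h u)) at 1 by ring. apply Rabs_triang. }
  lra.
Qed.

Lemma in_Lipd_sup_bounded h : in_Lipd d u v h -> sup_bounded u v (normd d u v h) h.
Proof.
  intros Hh. destruct (in_Lipd_bounded h Hh) as [K HK]. intros x Hx.
  apply Rle_trans with (sup_norm u v h); [| apply Rmax_l].
  apply (le_real_Lub_Rbar _ _ K); [exists x; auto |].
  intros z [y [Hy ->]]. auto.
Qed.

Lemma normd_ge0 h : in_Lipd d u v h -> 0 <= normd d u v h.
Proof.
  intros Hh. apply Rle_trans with (Rabs (h u)); [apply Rabs_pos |].
  apply in_Lipd_sup_bounded; auto. unfold inI; lra.
Qed.

End HolderBounds.

Section BoundAlgebra.

Variables d u v : R.

Lemma sup_bounded_le K K' h : K <= K' -> sup_bounded u v K h -> sup_bounded u v K' h.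
Proof. intros HK H x Hx. specialize (H x Hx). lra. Qed.

Lemma holder_le K K' h : K <= K' -> holder d u v K h -> holder d u v K' h.
Proof.
  intros HK H x y Hx Hy Hxy. apply Rle_trans with (1 := H x y Hx Hy Hxy).
  apply Rmult_le_compat_r; [left; apply Rpower_gt0 | exact HK].
Qed.

Lemma sup_bounded_ext K h h' :
  (forall x, inI u v x -> h' x = h x) -> sup_bounded u v K h -> sup_bounded u v K h'.
Proof. intros E H x Hx. rewrite E; auto. Qed.

Lemma holder_ext K h h' :
  (forall x, inI u v x -> h' x = h x) -> holder d u v K h -> holder d u v K h'.
Proof. intros E H x y Hx Hy Hxy. rewrite (E x), (E y); auto. Qed.

Lemma sup_bounded_plus K1 K2 h1 h2 : sup_bounded u v K1 h1 -> sup_bounded u v K2 h2 ->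
  sup_bounded u v (K1 + K2) (fun x => h1 x + h2 x).
Proof.
  intros H1 H2 x Hx. apply Rle_trans with (1 := Rabs_triang _ _).
  apply Rplus_le_compat; auto.
Qed.

Lemma holder_plus K1 K2 h1 h2 : holder d u v K1 h1 -> holder d u v K2 h2 ->
  holder d u v (K1 + K2) (fun x => h1 x + h2 x).
Proof.
  intros H1 H2 x y Hx Hy Hxy.
  replace (h1 x + h2 x - (h1 y + h2 y)) with ((h1 x - h1 y) + (h2 x - h2 y)) by ring.
  apply Rle_trans with (1 := Rabs_triang _ _). rewrite Rmult_plus_distr_r.
  apply Rplus_le_compat; auto.
Qed.

Lemma sup_bounded_minus K1 K2 h1 h2 : sup_bounded u v K1 h1 -> sup_bounded u v K2 h2 ->
  sup_bounded u v (K1 + K2) (fun x => h1 x - h2 x).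
Proof.
  intros H1 H2 x Hx. apply Rle_trans with (Rabs (h1 x) + Rabs (- h2 x)).
  - apply Rabs_triang.
  - rewrite Rabs_Ropp. apply Rplus_le_compat; auto.
Qed.

Lemma holder_minus K1 K2 h1 h2 : holder d u v K1 h1 -> holder d u v K2 h2 ->
  holder d u v (K1 + K2) (fun x => h1 x - h2 x).
Proof.
  intros H1 H2 x y Hx Hy Hxy.
  replace (h1 x - h2 x - (h1 y - h2 y)) with ((h1 x - h1 y) - (h2 x - h2 y)) by ring.
  apply Rle_trans with (Rabs (h1 x - h1 y) + Rabs (- (h2 x - h2 y))).
  - apply Rabs_triang.
  - rewrite Rabs_Ropp, Rmult_plus_distr_r. apply Rplus_le_compat; auto.
Qed.

End BoundAlgebra.
Lemma in_Lipd_minus d u v g h : in_Lipd d u v g -> in_Lipd d u v h ->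
  in_Lipd d u v (fun x => g x - h x).
Proof. intros Hg Hh. eapply holder_in_Lipd, holder_minus; apply in_Lipd_holder; eauto. Qed.

Lemma normd_limit_unique d u v (F : nat -> R -> R) g1 g2 : u <= v -> 0 < d ->
  (forall n, in_Lipd d u v (fun x => F n x - g1 x)) ->
  (forall n, in_Lipd d u v (fun x => F n x - g2 x)) ->
  is_lim_seq (fun n => normd d u v (fun x => F n x - g1 x)) 0 ->
  is_lim_seq (fun n => normd d u v (fun x => F n x - g2 x)) 0 ->
  forall x, inI u v x -> g1 x = g2 x.
Proof.
  intros Huv Hd H1 H2 L1 L2 x Hx.
  assert (Hle : forall n, Rabs (g1 x - g2 x) <=
            normd d u v (fun x => F n x - g1 x) + normd d u v (fun x => F n x - g2 x)).
  { intros n.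
    assert (A1 := in_Lipd_sup_bounded d u v Huv Hd _ (H1 n) x Hx).
    assert (A2 := in_Lipd_sup_bounded d u v Huv Hd _ (H2 n) x Hx).
    replace (g1 x - g2 x) with ((F n x - g2 x) + - (F n x - g1 x)) by ring.
    apply Rle_trans with (1 := Rabs_triang _ _). rewrite Rabs_Ropp. lra. }
  assert (H0 := is_lim_seq_le _ _ _ _ Hle (is_lim_seq_const _) (is_lim_seq_plus' _ _ _ _ L1 L2)).
  simpl in H0. rewrite Rplus_0_r in H0.
  apply Rminus_diag_uniq, Rabs_eq_0. apply Rle_antisym; [exact H0 | apply Rabs_pos].
Qed.

(* For [x], [y] in different pieces, the distances from [x] and [y] to the nearest piece
   ends add up to at most [|x - y|], and the smaller one is at most [|x - y| / 2]; so the
   sum of their [d]-th powers is at most [2 * cross_factor d * |x - y| ^ d]. *)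
Definition cross_factor (d : R) : R := (1 + Rpower (/ 2) d) / 2.

Lemma cross_factor_bounds d : 0 < d -> 1 / 2 < cross_factor d < 1.
Proof.
  intros Hd. assert (0 < Rpower (/ 2) d) by apply Rpower_gt0.
  assert (Rpower (/ 2) d < 1) by (apply Rpower_half_lt_1; auto).
  unfold cross_factor. lra.
Qed.

(* [h] has norm at most [K] for [2 ||.||_oo + Lip_d].  Unlike [||.||_d], this norm is
   contracted by every [T^{alpha_r}] with one and the same factor [wfactor d]. *)
Definition wbounded (d u v K : R) (h : R -> R) : Prop :=
  exists M L, 0 <= M /\ 0 <= L /\ 2 * M + L <= K /\
    sup_bounded u v M h /\ holder d u v L h.

Definition wfactor (d : R) : R := Rmax (3 / 4) (cross_factor d).

Lemma wfactor_bounds d : 0 < d -> 3 / 4 <= wfactor d /\ cross_factor d <= wfactor d /\ wfactor d < 1.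
Proof.
  intros Hd. assert (H := cross_factor_bounds d Hd). unfold wfactor.
  split; [apply Rmax_l | split; [apply Rmax_r | apply Rmax_lub_lt; lra]].
Qed.

Section WeightedBounds.

Variables d u v : R.

Lemma wbounded_le K K' h : K <= K' -> wbounded d u v K h -> wbounded d u v K' h.
Proof. intros HK [M [L [? [? [? [? ?]]]]]]. exists M, L. repeat split; auto. lra. Qed.

Lemma wbounded_ext K h h' :
  (forall x, inI u v x -> h' x = h x) -> wbounded d u v K h -> wbounded d u v K h'.
Proof.
  intros E [M [L [? [? [? [? ?]]]]]]. exists M, L. repeat split; auto.
  - eapply sup_bounded_ext; eauto.
  - eapply holder_ext; eauto.
Qed.

Lemma wbounded_plus K1 K2 h1 h2 : wbounded d u v K1 h1 -> wbounded d u v K2 h2 ->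
  wbounded d u v (K1 + K2) (fun x => h1 x + h2 x).
Proof.
  intros [M1 [L1 [? [? [? [? ?]]]]]] [M2 [L2 [? [? [? [? ?]]]]]].
  exists (M1 + M2), (L1 + L2). repeat split; try lra.
  - apply sup_bounded_plus; auto.
  - apply holder_plus; auto.
Qed.

Lemma wbounded_minus K1 K2 h1 h2 : wbounded d u v K1 h1 -> wbounded d u v K2 h2 ->
  wbounded d u v (K1 + K2) (fun x => h1 x - h2 x).
Proof.
  intros [M1 [L1 [? [? [? [? ?]]]]]] [M2 [L2 [? [? [? [? ?]]]]]].
  exists (M1 + M2), (L1 + L2). repeat split; try lra.
  - apply sup_bounded_minus; auto.
  - apply holder_minus; auto.
Qed.

Lemma wbounded_bounds K h : wbounded d u v K h -> sup_bounded u v K h /\ holder d u v K h.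
Proof.
  intros [M [L [? [? [? [? ?]]]]]].
  split; [apply sup_bounded_le with M | apply holder_le with L]; auto; lra.
Qed.

Lemma wbounded_normd h : u <= v -> 0 < d -> in_Lipd d u v h ->
  wbounded d u v (3 * normd d u v h) h.
Proof.
  intros Huv Hd Hh. exists (normd d u v h), (normd d u v h).
  assert (0 <= normd d u v h) by (apply normd_ge0; auto).
  repeat split; try lra.
  - apply in_Lipd_sup_bounded; auto.
  - apply in_Lipd_holder; auto.
Qed.

End WeightedBounds.

(** * The partition and the maps [Q_i] *)

Lemma pick_aux_spec xs x n i : (1 <= i)%nat ->
  let j := pick_aux xs x i n in
  (i <= j <= i + n)%nat /\ (x <= xs j \/ j = (i + n)%nat) /\
  (forall k, (i <= k < j)%nat -> xs k < x).
Proof.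
  revert i. induction n as [| n IH]; intros i Hi; simpl.
  - repeat split; [lia | lia | right; lia | intros; lia].
  - destruct (Rle_dec x (xs i)) as [Hle | Hnle].
    + repeat split; [lia | lia | left; auto | intros; lia].
    + destruct (IH (S i) ltac:(lia)) as [H1 [H2 H3]].
      repeat split; [lia | lia | destruct H2; [left | right; lia]; auto |].
      intros k Hk. destruct (Nat.eq_dec k i) as [-> | ]; [lra | apply H3; lia].
Qed.

Section Partition.

Variables (N : nat) (xs : nat -> R).
Hypotheses (HN : (1 <= N)%nat) (Hxs : forall i, (i < N)%nat -> xs i < xs (S i)).

Local Notation x0 := (xs 0%nat).
Local Notation xN := (xs N).
Local Notation piece i x := (inI (xs (i - 1)%nat) (xs i) x).
Local Notation Q := (Q_map xs N).
Local Notation a := (a_coef xs N).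

Lemma xs_le k m : (k <= m <= N)%nat -> xs k <= xs m.
Proof.
  induction m as [| m IH]; intros Hkm.
  - replace k with 0%nat by lia. lra.
  - destruct (Nat.eq_dec k (S m)) as [-> | Hne]; [lra |].
    assert (xs m < xs (S m)) by (apply Hxs; lia).
    assert (xs k <= xs m) by (apply IH; lia). lra.
Qed.

Lemma xs_lt k m : (k < m <= N)%nat -> xs k < xs m.
Proof.
  intros Hkm. destruct m as [| m]; [lia |].
  assert (xs m < xs (S m)) by (apply Hxs; lia).
  assert (xs k <= xs m) by (apply xs_le; lia). lra.
Qed.

Lemma x0_lt_xN : x0 < xN.
Proof. apply xs_lt; lia. Qed.

Lemma x0_le_xN : x0 <= xN.
Proof. left; apply x0_lt_xN. Qed.

#[local] Hint Resolve x0_le_xN : core.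

Lemma piece_inI i x : (1 <= i <= N)%nat -> piece i x -> inI x0 xN x.
Proof.
  intros Hi Hx. assert (xs 0%nat <= xs (i - 1)%nat) by (apply xs_le; lia).
  assert (xs i <= xs N) by (apply xs_le; lia). unfold inI in *; lra.
Qed.

Lemma pick_index_spec x : inI x0 xN x ->
  let j := pick_index xs N x in
  (1 <= j <= N)%nat /\ piece j x /\ (forall k, (1 <= k < j)%nat -> xs k < x).
Proof.
  intros Hx. unfold pick_index.
  destruct (pick_aux_spec xs x (N - 1) 1 ltac:(lia)) as [H1 [H2 H3]].
  set (j := pick_aux xs x 1 (N - 1)) in *.
  repeat split; auto; try lia; unfold inI in *.
  - destruct (Nat.eq_dec j 1) as [-> | Hne]; [simpl; lra |].
    left. apply H3; lia.
  - destruct H2 as [H2 | ->]; auto. replace (1 + (N - 1))%nat with N by lia. lra.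
Qed.

Lemma piece_exists x : inI x0 xN x -> exists i, (1 <= i <= N)%nat /\ piece i x.
Proof. intros Hx. destruct (pick_index_spec x Hx) as [H1 [H2 _]]. eauto. Qed.

Lemma pick_index_piece i x : (1 <= i <= N)%nat -> piece i x ->
  pick_index xs N x = i \/
  (pick_index xs N x = (i - 1)%nat /\ (2 <= i)%nat /\ x = xs (i - 1)%nat).
Proof.
  intros Hi Hx.
  destruct (pick_index_spec x (piece_inI i x Hi Hx)) as [H1 [H2 H3]].
  set (j := pick_index xs N x) in *. unfold inI in *.
  destruct (Nat.lt_trichotomy j i) as [Hlt | [Heq | Hgt]]; auto.
  - right. destruct (Nat.eq_dec j (i - 1)) as [Hj | Hj].
    + repeat split; auto; [lia |]. rewrite Hj in H2. lra.
    + assert (xs j < xs (i - 1)%nat) by (apply xs_lt; lia). lra.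
  - specialize (H3 i ltac:(lia)). lra.
Qed.

Lemma a_coef_pos i : (1 <= i <= N)%nat -> 0 < a i.
Proof.
  intros Hi. assert (xs (i - 1)%nat < xs i) by (apply xs_lt; lia).
  assert (H0N := x0_lt_xN). unfold a_coef. apply Rdiv_lt_0_compat; lra.
Qed.

Lemma a_coef_le1 i : (1 <= i <= N)%nat -> a i <= 1.
Proof.
  intros Hi. assert (xs 0%nat <= xs (i - 1)%nat) by (apply xs_le; lia).
  assert (xs i <= xs N) by (apply xs_le; lia). assert (H0N := x0_lt_xN).
  unfold a_coef. apply Rle_div_l; lra.
Qed.

Lemma Q_map_eq i x : (1 <= i <= N)%nat ->
  Q i x = x0 + (x - xs (i - 1)%nat) * (xN - x0) / (xs i - xs (i - 1)%nat).
Proof.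
  intros Hi. assert (xs (i - 1)%nat < xs i) by (apply xs_lt; lia).
  assert (H0N := x0_lt_xN). unfold Q_map, a_coef. field. lra.
Qed.

Lemma Q_map_sub i x y : (1 <= i <= N)%nat ->
  x - y = a i * (Q i x - Q i y).
Proof.
  intros Hi. rewrite !Q_map_eq by auto.
  assert (xs (i - 1)%nat < xs i) by (apply xs_lt; lia).
  assert (H0N := x0_lt_xN). unfold a_coef. field. lra.
Qed.

Lemma Q_map_left i : (1 <= i <= N)%nat -> Q i (xs (i - 1)%nat) = x0.
Proof. intros Hi. rewrite Q_map_eq by auto. unfold Rdiv. ring. Qed.

Lemma Q_map_right i : (1 <= i <= N)%nat -> Q i (xs i) = xN.
Proof.
  intros Hi. rewrite Q_map_eq by auto.
  assert (xs (i - 1)%nat < xs i) by (apply xs_lt; lia). field. lra.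
Qed.

Lemma Q_map_inI i x : (1 <= i <= N)%nat -> piece i x -> inI x0 xN (Q i x).
Proof.
  intros Hi Hx. rewrite Q_map_eq by auto.
  assert (xs (i - 1)%nat < xs i) by (apply xs_lt; lia). assert (H0N := x0_lt_xN).
  unfold inI in *. set (D := xs i - xs (i - 1)%nat). set (L := xs N - xs 0%nat).
  assert (0 <= (x - xs (i - 1)%nat) * L / D).
  { apply Rdiv_le_0_compat; [apply Rmult_le_pos |]; unfold L, D; lra. }
  assert ((x - xs (i - 1)%nat) * L / D <= L).
  { apply Rle_div_l; [unfold D; lra |].
    rewrite Rmult_comm. apply Rmult_le_compat_l; unfold L, D; lra. }
  unfold L in *. lra.
Qed.

Lemma Rpower_Q_map_sub d i x y : (1 <= i <= N)%nat -> x <> y ->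
  Rpower (Rabs (x - y)) d =
  Rpower (a i) d * Rpower (Rabs (Q i x - Q i y)) d.
Proof.
  intros Hi Hxy. assert (Ha := a_coef_pos i Hi).
  rewrite (Q_map_sub i x y Hi), Rabs_mult, (Rabs_right (a i)) by lra.
  apply eq_sym, Rpower_mult_distr; auto.
  apply Rabs_pos_lt. intros H0. apply Hxy, Rminus_diag_uniq.
  rewrite (Q_map_sub i x y Hi), H0. ring.
Qed.

Section PiecewiseProduct.

Variables (d c Mv Lv : R) (al : nat -> R -> R) (v w : R -> R).
Hypotheses (Hd : 0 < d) (Hc : 0 <= c) (HMv : 0 <= Mv) (HLv : 0 <= Lv).

Hypothesis Hal_lip : forall i, (1 <= i <= N)%nat -> in_Lipd d x0 xN (al i).
Hypothesis Hal : forall i, (1 <= i <= N)%nat -> normd d x0 xN (al i) <= c * Rpower (a i) d / 2.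
Hypotheses (Hv0 : v x0 = 0) (HvN : v xN = 0).
Hypotheses (HvS : sup_bounded x0 xN Mv v) (HvH : holder d x0 xN Lv v).
Hypothesis Hw : forall i x, (1 <= i <= N)%nat -> piece i x -> w x = al i (Q i x) * v (Q i x).

Let al_sup i : (1 <= i <= N)%nat -> sup_bounded x0 xN (c * Rpower (a i) d / 2) (al i).
Proof. intros Hi. eapply sup_bounded_le, in_Lipd_sup_bounded; auto. Qed.

Let al_holder i : (1 <= i <= N)%nat -> holder d x0 xN (c * Rpower (a i) d / 2) (al i).
Proof. intros Hi. eapply holder_le, in_Lipd_holder; auto. Qed.

Lemma product_sup_bounded : sup_bounded x0 xN (c * Mv / 2) w.
Proof.
  intros x Hx. destruct (piece_exists x Hx) as [i [Hi Hxi]].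
  assert (HQ := Q_map_inI i x Hi Hxi).
  assert (Ha := a_coef_pos i Hi).
  assert (Hpow := Rpower_le_1 (a i) d (conj Ha (a_coef_le1 i Hi)) ltac:(lra)).
  rewrite (Hw i x Hi Hxi), Rabs_mult.
  apply Rle_trans with (c * Rpower (a i) d / 2 * Mv).
  - apply Rmult_le_compat; try apply Rabs_pos; [apply al_sup | apply HvS]; auto.
  - assert (0 <= c * Mv) by (apply Rmult_le_pos; auto). nra.
Qed.

Lemma product_near_root i x z s : (1 <= i <= N)%nat -> piece i x -> piece i z ->
  v (Q i z) = 0 -> 0 < s -> Rabs (x - z) <= s ->
  Rabs (w x) <= c / 2 * Lv * Rpower s d.
Proof.
  intros Hi Hx Hz Hvz Hs Hxz.
  assert (0 < Rpower s d) by apply Rpower_gt0.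
  rewrite (Hw i x Hi Hx).
  destruct (Req_dec x z) as [-> | Hne].
  { rewrite Hvz, Rmult_0_r, Rabs_R0. apply Rmult_le_pos; nra. }
  assert (Hp := Q_map_inI i x Hi Hx).
  assert (Hq := Q_map_inI i z Hi Hz).
  assert (HQne : Q i x <> Q i z).
  { intros E. apply Hne, Rminus_diag_uniq. rewrite (Q_map_sub i x z Hi), E. ring. }
  assert (Hscale := Rpower_Q_map_sub d i x z Hi Hne).
  assert (Hle : Rpower (Rabs (x - z)) d <= Rpower s d).
  { apply Rle_Rpower_l; [lra |]. split; auto. apply Rabs_pos_lt. lra. }
  replace (v (Q i x)) with (v (Q i x) - v (Q i z)) by (rewrite Hvz; ring).
  rewrite Rabs_mult.
  apply Rle_trans with (c * Rpower (a i) d / 2 * (Lv * Rpower (Rabs (Q i x - Q i z)) d)).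
  - apply Rmult_le_compat; try apply Rabs_pos; [apply al_sup | apply HvH]; auto.
  - apply Rle_trans with (c / 2 * Lv * Rpower (Rabs (x - z)) d).
    + rewrite Hscale. right; field.
    + apply Rmult_le_compat_l; [apply Rmult_le_pos |]; lra.
Qed.

Lemma product_holder_within i x y : (1 <= i <= N)%nat -> piece i x -> piece i y -> x <> y ->
  Rabs (w x - w y) <= c * ((Mv + Lv) / 2) * Rpower (Rabs (x - y)) d.
Proof.
  intros Hi Hx Hy Hxy. rewrite (Hw i x Hi Hx), (Hw i y Hi Hy).
  set (p := Q i x). set (q := Q i y).
  assert (Hp : inI x0 xN p) by (apply Q_map_inI; auto).
  assert (Hq : inI x0 xN q) by (apply Q_map_inI; auto).
  assert (Hpq : p <> q).
  { intros E. apply Hxy, Rminus_diag_uniq. rewrite (Q_map_sub i x y Hi).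
    fold p q. rewrite E. ring. }
  rewrite (Rpower_Q_map_sub d i x y Hi Hxy). fold p q.
  assert (0 < Rpower (a i) d) by apply Rpower_gt0.
  assert (0 < Rpower (Rabs (p - q)) d) by apply Rpower_gt0.
  replace (al i p * v p - al i q * v q) with ((al i p - al i q) * v p + al i q * (v p - v q))
    by ring.
  apply Rle_trans with (1 := Rabs_triang _ _). rewrite !Rabs_mult.
  apply Rle_trans with (c * Rpower (a i) d / 2 * Rpower (Rabs (p - q)) d * Mv
                        + c * Rpower (a i) d / 2 * (Lv * Rpower (Rabs (p - q)) d)).
  - apply Rplus_le_compat; apply Rmult_le_compat; try apply Rabs_pos;
      [apply al_holder | apply HvS | apply al_sup | apply HvH]; auto.
  - right; field.
Qed.

Lemma product_holder_across i j x y : (1 <= i <= N)%nat -> (1 <= j <= N)%nat -> (i < j)%nat ->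
  piece i x -> piece j y -> x <> y ->
  Rabs (w x - w y) <= c * cross_factor d * Lv * Rpower (Rabs (x - y)) d.
Proof.
  intros Hi Hj Hij Hx Hy Hxy.
  assert (Hij' : xs i <= xs (j - 1)%nat) by (apply xs_le; auto; lia).
  assert (Hend_i : piece i (xs i)) by (unfold inI in *; lra).
  assert (Hend_j : piece j (xs (j - 1)%nat)) by (unfold inI in *; lra).
  unfold inI in Hx, Hy.
  set (t := y - x).
  assert (Ht : 0 < t) by (unfold t; destruct (Req_dec x y); [contradiction | lra]).
  rewrite (Rabs_minus_sym x y), (Rabs_right (y - x)) by lra. fold t.
  assert (Hwx : forall s, 0 < s -> xs i - x <= s -> Rabs (w x) <= c / 2 * Lv * Rpower s d).
  { intros s Hs Hxs'. apply (product_near_root i x (xs i)); auto.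
    - rewrite Q_map_right; auto.
    - rewrite Rabs_minus_sym, Rabs_right; lra. }
  assert (Hwy : forall s, 0 < s -> y - xs (j - 1)%nat <= s ->
                  Rabs (w y) <= c / 2 * Lv * Rpower s d).
  { intros s Hs Hys. apply (product_near_root j y (xs (j - 1)%nat)); auto.
    - rewrite Q_map_left; auto.
    - rewrite Rabs_right; lra. }
  assert (Hhalf : Rpower (t / 2) d = Rpower (/ 2) d * Rpower t d).
  { unfold Rdiv. rewrite Rmult_comm, Rpower_mult_distr; lra. }
  assert (Htri : Rabs (w x - w y) <= Rabs (w x) + Rabs (w y)).
  { apply Rle_trans with (Rabs (w x) + Rabs (- w y)); [apply Rabs_triang |].
    rewrite Rabs_Ropp. lra. }
  replace (c * cross_factor d * Lv * Rpower t d)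
    with (c / 2 * Lv * Rpower (t / 2) d + c / 2 * Lv * Rpower t d)
    by (rewrite Hhalf; unfold cross_factor; field).
  destruct (Rle_dec (xs i - x) (y - xs (j - 1)%nat)).
  - assert (Rabs (w x) <= c / 2 * Lv * Rpower (t / 2) d) by (apply Hwx; unfold t; lra).
    assert (Rabs (w y) <= c / 2 * Lv * Rpower t d) by (apply Hwy; unfold t; lra).
    lra.
  - assert (Rabs (w x) <= c / 2 * Lv * Rpower t d) by (apply Hwx; unfold t; lra).
    assert (Rabs (w y) <= c / 2 * Lv * Rpower (t / 2) d) by (apply Hwy; unfold t; lra).
    lra.
Qed.

Lemma product_holder : holder d x0 xN (c * Rmax ((Mv + Lv) / 2) (cross_factor d * Lv)) w.
Proof.
  intros x y Hx Hy Hxy.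
  destruct (piece_exists x Hx) as [i [Hi Hxi]].
  destruct (piece_exists y Hy) as [j [Hj Hyj]].
  assert (Hwithin : c * ((Mv + Lv) / 2) <= c * Rmax ((Mv + Lv) / 2) (cross_factor d * Lv))
    by (apply Rmult_le_compat_l; [auto | apply Rmax_l]).
  assert (Hacross : c * cross_factor d * Lv <= c * Rmax ((Mv + Lv) / 2) (cross_factor d * Lv))
    by (rewrite Rmult_assoc; apply Rmult_le_compat_l; [auto | apply Rmax_r]).
  destruct (Nat.lt_trichotomy i j) as [Hlt | [<- | Hgt]].
  - eapply Rle_trans; [apply (product_holder_across i j) |]; auto.
    apply Rmult_le_compat_r; [left; apply Rpower_gt0 | lra].
  - eapply Rle_trans; [apply (product_holder_within i) |]; auto.
    apply Rmult_le_compat_r; [left; apply Rpower_gt0 | lra].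
  - rewrite (Rabs_minus_sym (w x)), (Rabs_minus_sym x y).
    eapply Rle_trans; [apply (product_holder_across j i) |]; auto.
    apply Rmult_le_compat_r; [left; apply Rpower_gt0 | lra].
Qed.

Lemma product_normd K : Mv <= K -> Lv <= K -> normd d x0 xN w <= c * K.
Proof.
  intros HMK HLK. assert (Hrho := cross_factor_bounds d Hd).
  apply normd_le_of_bounds; [apply Rmult_le_pos; lra | |].
  - eapply sup_bounded_le, product_sup_bounded. nra.
  - eapply holder_le, product_holder. apply Rmult_le_compat_l; auto.
    apply Rmax_lub; nra.
Qed.

Lemma product_wbounded K : c <= 1 -> 2 * Mv + Lv <= K -> wbounded d x0 xN (wfactor d * K) w.
Proof.
  intros Hc1 HK. assert (Hth := wfactor_bounds d Hd). assert (Hrho := cross_factor_bounds d Hd).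
  set (L := Rmax ((Mv + Lv) / 2) (cross_factor d * Lv)).
  assert (HL : 0 <= L) by (apply Rle_trans with ((Mv + Lv) / 2); [lra | apply Rmax_l]).
  exists (c * Mv / 2), (c * L). repeat split.
  - apply Rmult_le_pos; [apply Rmult_le_pos |]; lra.
  - apply Rmult_le_pos; lra.
  - assert (c * Mv <= Mv) by nra. assert (c * L <= L) by nra.
    assert (Mv + L <= wfactor d * (2 * Mv + Lv)).
    { unfold L, Rmax. destruct Rle_dec; nra. }
    assert (wfactor d * (2 * Mv + Lv) <= wfactor d * K) by (apply Rmult_le_compat_l; lra).
    lra.
  - apply product_sup_bounded.
  - apply product_holder.
Qed.

End PiecewiseProduct.

Section Operator.

Variables (d c : R) (f br : R -> R) (al : nat -> R -> R).
Hypotheses (Hd : 0 < d) (Hc : 0 <= c) (Hf : in_Lipd d x0 xN f) (Hbr : in_Lipdf d x0 xN f br).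
Hypothesis Hal_lip : forall i, (1 <= i <= N)%nat -> in_Lipd d x0 xN (al i).
Hypothesis Hal : forall i, (1 <= i <= N)%nat ->
  normd d x0 xN (al i) <= c * Rpower (a i) d / 2.

Local Notation T := (T_op xs N f al br).

(* At an interior partition point both adjacent branches reduce to [f], since
   [g - br] vanishes at the ends of [I]. *)
Lemma T_op_branch g i x : in_Lipdf d x0 xN f g -> (1 <= i <= N)%nat -> piece i x ->
  T g x = T_branch xs N f al br g i x.
Proof.
  intros [_ [Hg0 HgN]] Hi Hx. destruct Hbr as [_ [Hb0 HbN]]. unfold T_op.
  destruct (pick_index_piece i x Hi Hx) as [-> | [-> [Hi2 ->]]]; auto.
  unfold T_branch. rewrite Q_map_left, Q_map_right by lia.
  rewrite Hg0, HgN, Hb0, HbN. ring.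
Qed.

Lemma T_op_sub g h i x : in_Lipdf d x0 xN f g -> in_Lipdf d x0 xN f h ->
  (1 <= i <= N)%nat -> piece i x ->
  T g x - T h x = al i (Q i x) * (g (Q i x) - h (Q i x)).
Proof. intros Hg Hh Hi Hx. rewrite !(T_op_branch _ i x) by auto. unfold T_branch. ring. Qed.

Lemma T_op_sub_f g i x : in_Lipdf d x0 xN f g -> (1 <= i <= N)%nat -> piece i x ->
  T g x - f x = al i (Q i x) * (g (Q i x) - br (Q i x)).
Proof. intros Hg Hi Hx. rewrite (T_op_branch g i x) by auto. unfold T_branch. ring. Qed.

Lemma T_op_sub_f_wbounded g K : in_Lipdf d x0 xN f g -> c <= 1 ->
  wbounded d x0 xN K (fun x => g x - br x) ->
  wbounded d x0 xN (wfactor d * K) (fun x => T g x - f x).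
Proof.
  intros Hg Hc1 [M [L [HM [HL [HK [HS HH]]]]]].
  destruct Hg as [Hg [Hg0 HgN]], Hbr as [_ [Hb0 HbN]].
  eapply (product_wbounded d c M L al (fun x => g x - br x)); eauto.
  - rewrite Hg0, Hb0. ring.
  - rewrite HgN, HbN. ring.
  - intros i x Hi Hx. apply T_op_sub_f; auto. split; auto.
Qed.

Lemma T_op_endpoints g : in_Lipdf d x0 xN f g -> T g x0 = f x0 /\ T g xN = f xN.
Proof.
  intros Hg. assert (Hgb := Hg). destruct Hgb as [_ [Hg0 HgN]], Hbr as [_ [Hb0 HbN]].
  assert (Hpos : x0 < xs 1%nat) by (apply xs_lt; lia).
  assert (HposN : xs (N - 1)%nat < xN) by (apply xs_lt; lia).
  split; apply Rminus_diag_uniq.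
  - rewrite (T_op_sub_f g 1 x0 Hg) by (unfold inI; simpl; lia || lra).
    change x0 with (xs (1 - 1)%nat). rewrite Q_map_left by lia. simpl.
    rewrite Hg0, Hb0. ring.
  - rewrite (T_op_sub_f g N xN Hg) by (unfold inI; lia || lra).
    rewrite Q_map_right by lia. rewrite HgN, HbN. ring.
Qed.

Lemma T_op_in_Lipdf g : in_Lipdf d x0 xN f g -> in_Lipdf d x0 xN f (T g).
Proof.
  intros Hg. split; [| apply T_op_endpoints; auto].
  assert (Hg' := Hg). destruct Hg' as [Hgl [Hg0 HgN]], Hbr as [Hbl [Hb0 HbN]].
  set (K := normd d x0 xN g + normd d x0 xN br).
  assert (0 <= K) by (unfold K; apply Rplus_le_le_0_compat; apply normd_ge0; auto).
  assert (Hdiff : holder d x0 xN (c * Rmax ((K + K) / 2) (cross_factor d * K))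
                    (fun x => T g x - f x)).
  { eapply (product_holder d c K K al (fun x => g x - br x)); eauto.
    - rewrite Hg0, Hb0. ring.
    - rewrite HgN, HbN. ring.
    - apply sup_bounded_minus; apply in_Lipd_sup_bounded; auto.
    - apply holder_minus; apply in_Lipd_holder; auto.
    - intros i x Hi Hx. apply T_op_sub_f; auto. }
  eapply holder_in_Lipd, holder_ext, (holder_plus _ _ _ _ _ _ _ (in_Lipd_holder _ _ _ _ Hf) Hdiff).
  intros x _. cbv beta. ring.
Qed.

Lemma T_op_contraction g h : in_Lipdf d x0 xN f g -> in_Lipdf d x0 xN f h ->
  normd d x0 xN (fun x => T g x - T h x) <= c * normd d x0 xN (fun x => g x - h x).
Proof.
  intros Hg Hh. assert (Hg' := Hg). assert (Hh' := Hh).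
  destruct Hg' as [Hgl [Hg0 HgN]], Hh' as [Hhl [Hh0 HhN]].
  set (K := normd d x0 xN (fun x => g x - h x)).
  assert (Hgh : in_Lipd d x0 xN (fun x => g x - h x)).
  { apply in_Lipd_minus; auto. }
  assert (0 <= K) by (apply normd_ge0; auto).
  eapply (product_normd d c K K al (fun x => g x - h x)); eauto; try lra.
  - apply in_Lipd_sup_bounded; auto.
  - apply in_Lipd_holder; auto.
  - intros i x Hi Hx. apply T_op_sub; auto.
Qed.

Lemma T_op_wcontraction g h K : in_Lipdf d x0 xN f g -> in_Lipdf d x0 xN f h -> c <= 1 ->
  wbounded d x0 xN K (fun x => g x - h x) ->
  wbounded d x0 xN (wfactor d * K) (fun x => T g x - T h x).
Proof.
  intros Hg Hh Hc1 [M [L [HM [HL [HK [HS HH]]]]]].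
  assert (Hg' := Hg). assert (Hh' := Hh).
  destruct Hg' as [_ [Hg0 HgN]], Hh' as [_ [Hh0 HhN]].
  eapply (product_wbounded d c M L al (fun x => g x - h x)); eauto.
  - rewrite Hg0, Hh0. ring.
  - rewrite HgN, HhN. ring.
  - intros i x Hi Hx. apply T_op_sub; auto.
Qed.

Lemma T_op_shift_wbounded Mb : c <= 1 -> normd d x0 xN br <= Mb ->
  wbounded d x0 xN (3 * (normd d x0 xN f + Mb)) (fun x => T f x - f x).
Proof.
  intros Hc1 HMb. destruct Hbr as [Hbl _].
  assert (Hth := wfactor_bounds d Hd).
  assert (0 <= normd d x0 xN f) by (apply normd_ge0; auto).
  assert (0 <= normd d x0 xN br) by (apply normd_ge0; auto).
  apply wbounded_le with (wfactor d * (3 * normd d x0 xN f + 3 * normd d x0 xN br)); [nra |].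
  apply T_op_sub_f_wbounded; auto.
  - split; auto.
  - apply wbounded_minus; apply wbounded_normd; auto.
Qed.

End Operator.

End Partition.

(** * Forward iteration *)

Definition pointwise_lim (F : nat -> R -> R) (x : R) : R := real (Lim_seq (fun m => F m x)).

Lemma is_lim_seq_le_shift (s : nat -> R) (l K : R) n :
  is_lim_seq s l -> (forall k, s (n + k)%nat <= K) -> l <= K.
Proof.
  intros Hs HK. apply (is_lim_seq_incr_n s n l) in Hs.
  apply (is_lim_seq_le _ (fun _ => K) l K) in Hs; [exact Hs | | apply is_lim_seq_const].
  intros k. rewrite Nat.add_comm. apply HK.
Qed.

Section UniformCauchyLimit.

Variables (d u v : R) (F : nat -> R -> R) (B : nat -> R).
Hypothesis HB : is_lim_seq B 0.
Hypothesis HFS : forall n k, sup_bounded u v (B n) (fun x => F (n + k)%nat x - F n x).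
Hypothesis HFH : forall n k, holder d u v (B n) (fun x => F (n + k)%nat x - F n x).

Lemma pointwise_lim_correct x : inI u v x -> is_lim_seq (fun m => F m x) (pointwise_lim F x).
Proof.
  intros Hx. apply Lim_seq_correct', ex_lim_seq_cauchy_corr. intros eps.
  assert (HB' := proj2 (is_lim_seq_spec B 0) HB (pos_div_2 eps)).
  destruct HB' as [n0 Hn0]. exists n0. intros n m Hn Hm.
  assert (HBn0 := Hn0 n0 (Nat.le_refl n0)). simpl in HBn0.
  rewrite Rminus_0_r in HBn0. apply Rabs_def2 in HBn0.
  assert (Hfar : forall p, (n0 <= p)%nat -> Rabs (F p x - F n0 x) <= B n0).
  { intros p Hp. replace p with (n0 + (p - n0))%nat by lia. apply HFS; auto. }
  assert (Hn' := Hfar n Hn). assert (Hm' := Hfar m Hm).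
  replace (F n x - F m x) with ((F n x - F n0 x) - (F m x - F n0 x)) by ring.
  apply Rle_lt_trans with (Rabs (F n x - F n0 x) + Rabs (- (F m x - F n0 x))).
  - apply Rabs_triang.
  - rewrite Rabs_Ropp. simpl. lra.
Qed.

Lemma pointwise_lim_bounds n :
  sup_bounded u v (B n) (fun x => pointwise_lim F x - F n x) /\
  holder d u v (B n) (fun x => pointwise_lim F x - F n x).
Proof.
  split.
  - intros x Hx. apply (is_lim_seq_le_shift (fun m => Rabs (F m x - F n x)) _ _ n).
    + apply (is_lim_seq_abs _ (Finite _)), is_lim_seq_minus'.
      * apply pointwise_lim_correct; auto.
      * apply is_lim_seq_const.
    + intros k. apply HFS; auto.
  - intros x y Hx Hy Hxy.
    apply (is_lim_seq_le_shift (fun m => Rabs ((F m x - F n x) - (F m y - F n y))) _ _ n).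
    + apply (is_lim_seq_abs _ (Finite _)).
      apply is_lim_seq_minus'; apply is_lim_seq_minus';
        try apply pointwise_lim_correct; auto; apply is_lim_seq_const.
    + intros k. apply HFH; auto.
Qed.

End UniformCauchyLimit.

Section ForwardIteration.

Variables (d u v th K0 : R) (f : R -> R) (T : nat -> (R -> R) -> R -> R).
Hypotheses (Huv : u <= v) (Hd : 0 < d) (Hth : 0 <= th < 1) (Hf : in_Lipd d u v f).
Hypothesis T_stable : forall r g, in_Lipdf d u v f g -> in_Lipdf d u v f (T r g).
Hypothesis T_wcontraction : forall r g h K, in_Lipdf d u v f g -> in_Lipdf d u v f h ->
  wbounded d u v K (fun x => g x - h x) -> wbounded d u v (th * K) (fun x => T r g x - T r h x).
Hypothesis T_shift : forall r, wbounded d u v K0 (fun x => T r f x - f x).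

Local Notation fa := (pointwise_lim (fun m => Tcomp T m f)).

Let Hff : in_Lipdf d u v f f.
Proof. repeat split; auto. Qed.

Lemma Tcomp_stable n g : in_Lipdf d u v f g -> in_Lipdf d u v f (Tcomp T n g).
Proof. revert g. induction n; intros g Hg; simpl; auto. Qed.

Lemma Tcomp_wcontraction n g h K : in_Lipdf d u v f g -> in_Lipdf d u v f h ->
  wbounded d u v K (fun x => g x - h x) ->
  wbounded d u v (th ^ n * K) (fun x => Tcomp T n g x - Tcomp T n h x).
Proof.
  revert g h K. induction n as [| n IH]; intros g h K Hg Hh HK; simpl.
  - eapply wbounded_le; [| exact HK]. lra.
  - apply wbounded_le with (th ^ n * (th * K)); [right; ring |].
    apply IH; auto.
Qed.

Lemma Tcomp_wcauchy n k :
  wbounded d u v (K0 / (1 - th) * th ^ n) (fun x => Tcomp T (n + k) f x - Tcomp T n f x).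
Proof.
  assert (HK0 : 0 <= K0) by (destruct (T_shift 0) as [M [L [? [? [? _]]]]]; lra).
  assert (Htel : forall m, wbounded d u v (K0 * (th ^ n - th ^ (n + m)) / (1 - th))
                             (fun x => Tcomp T (n + m) f x - Tcomp T n f x)).
  { intros m. induction m as [| m IH].
    - rewrite Nat.add_0_r, Rminus_diag, Rmult_0_r, Rdiv_0_l.
      exists 0, 0. repeat split; try lra.
      + intros x _. rewrite Rminus_diag, Rabs_R0. lra.
      + intros x y _ _ _. rewrite !Rminus_diag, Rabs_R0. lra.
    - rewrite Nat.add_succ_r. simpl Tcomp.
      assert (Hstep := Tcomp_wcontraction (n + m) _ _ _ (T_stable (n + m) f Hff) Hff
                         (T_shift (n + m))).
      eapply wbounded_le, wbounded_ext, (wbounded_plus _ _ _ _ _ _ _ Hstep IH).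
      + right. simpl. field. lra.
      + intros x _. cbv beta. ring. }
  apply wbounded_le with (K0 * (th ^ n - th ^ (n + k)) / (1 - th)); [| apply Htel].
  assert (0 <= th ^ (n + k)) by (apply pow_le; lra).
  assert (0 <= K0 * th ^ (n + k)) by (apply Rmult_le_pos; lra).
  apply Rle_div_l; [lra |].
  replace (K0 / (1 - th) * th ^ n * (1 - th)) with (K0 * th ^ n) by (field; lra).
  lra.
Qed.

Lemma forward_lim_bounds n :
  sup_bounded u v (K0 / (1 - th) * th ^ n) (fun x => fa x - Tcomp T n f x) /\
  holder d u v (K0 / (1 - th) * th ^ n) (fun x => fa x - Tcomp T n f x).
Proof.
  apply (pointwise_lim_bounds d u v (fun m => Tcomp T m f) (fun n => K0 / (1 - th) * th ^ n)).
  - replace (Finite 0) with (Rbar_mult (K0 / (1 - th)) 0) by (simpl; f_equal; ring).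
    apply is_lim_seq_scal_l, is_lim_seq_geom. rewrite Rabs_right; lra.
  - intros m k. apply (proj1 (wbounded_bounds _ _ _ _ _ (Tcomp_wcauchy m k))).
  - intros m k. apply (proj2 (wbounded_bounds _ _ _ _ _ (Tcomp_wcauchy m k))).
Qed.

Lemma forward_lim_in_Lipdf : in_Lipdf d u v f fa.
Proof.
  split; [| split].
  - eapply holder_in_Lipd, holder_ext,
      (holder_plus _ _ _ _ _ _ _ (in_Lipd_holder _ _ _ _ Hf) (proj2 (forward_lim_bounds 0))).
    intros x _. cbv beta. simpl. ring.
  - unfold pointwise_lim. rewrite (Lim_seq_ext _ (fun _ => f u)), Lim_seq_const; auto.
    intros m. apply (Tcomp_stable m f Hff).
  - unfold pointwise_lim. rewrite (Lim_seq_ext _ (fun _ => f v)), Lim_seq_const; auto.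
    intros m. apply (Tcomp_stable m f Hff).
Qed.

Lemma Tcomp_converges g : in_Lipdf d u v f g ->
  is_lim_seq (fun r => normd d u v (fun x => Tcomp T r g x - fa x)) 0.
Proof.
  intros Hg. set (C := K0 / (1 - th)).
  set (Kg := 3 * normd d u v g + 3 * normd d u v f).
  assert (HKg : wbounded d u v Kg (fun x => g x - f x)).
  { apply wbounded_minus; apply wbounded_normd; auto. apply Hg. }
  assert (HC : 0 <= C).
  { destruct (T_shift 0) as [M [L [? [? [? _]]]]].
    apply Rdiv_le_0_compat; lra. }
  assert (HKg0 : 0 <= Kg) by (destruct HKg as [M [L [? [? [? _]]]]]; lra).
  assert (Hbound : forall r, normd d u v (fun x => Tcomp T r g x - fa x) <= (Kg + C) * th ^ r).
  { intros r.
    destruct (wbounded_bounds _ _ _ _ _ (Tcomp_wcontraction r g f Kg Hg Hff HKg)) as [S1 H1].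
    destruct (forward_lim_bounds r) as [S2 H2].
    set (e := fun x => (Tcomp T r g x - Tcomp T r f x) - (fa x - Tcomp T r f x)).
    assert (E : forall x, inI u v x -> Tcomp T r g x - fa x = e x) by (intros; unfold e; ring).
    replace ((Kg + C) * th ^ r) with (th ^ r * Kg + C * th ^ r) by ring.
    apply normd_le_of_bounds.
    - apply Rplus_le_le_0_compat; apply Rmult_le_pos; try apply pow_le; lra.
    - apply sup_bounded_ext with (h := e); [exact E | apply sup_bounded_minus; auto].
    - apply holder_ext with (h := e); [exact E | apply holder_minus; auto]. }
  apply is_lim_seq_le_le with (u := fun _ => 0) (w := fun r => (Kg + C) * th ^ r).
  - intros r. split; auto. apply normd_ge0; auto.
    apply in_Lipd_minus; [apply Tcomp_stable | apply forward_lim_in_Lipdf]; auto.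
  - apply is_lim_seq_const.
  - replace (Finite 0) with (Rbar_mult (Kg + C) 0) by (simpl; f_equal; ring).
    apply is_lim_seq_scal_l, is_lim_seq_geom. rewrite Rabs_right; lra.
Qed.

Lemma forward_lim_unique fb : in_Lipdf d u v f fb ->
  (forall g, in_Lipdf d u v f g ->
     is_lim_seq (fun r => normd d u v (fun x => Tcomp T r g x - fb x)) 0) ->
  forall x, inI u v x -> fb x = fa x.
Proof.
  intros Hfb Hlim. apply (normd_limit_unique d u v (fun n => Tcomp T n f)); auto.
  - intros n. apply in_Lipd_minus; [apply Tcomp_stable; auto | apply Hfb].
  - intros n. apply in_Lipd_minus; [apply Tcomp_stable; auto | apply forward_lim_in_Lipdf].
  - apply Tcomp_converges; auto.
Qed.

Lemma forward_limit_exists : exists fa, in_Lipdf d u v f fa /\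
  (forall g, in_Lipdf d u v f g ->
     is_lim_seq (fun r => normd d u v (fun x => Tcomp T r g x - fa x)) 0) /\
  (forall fb, in_Lipdf d u v f fb ->
     (forall g, in_Lipdf d u v f g ->
        is_lim_seq (fun r => normd d u v (fun x => Tcomp T r g x - fb x)) 0) ->
     forall x, inI u v x -> fb x = fa x).
Proof.
  exists fa. split; [| split].
  - apply forward_lim_in_Lipdf.
  - apply Tcomp_converges.
  - apply forward_lim_unique.
Qed.

End ForwardIteration.

Lemma finite_slack (F : nat -> R) K n : 0 < K -> (forall i, (1 <= i <= n)%nat -> F i < K) ->
  exists c, 0 <= c < K /\ forall i, (1 <= i <= n)%nat -> F i <= c.
Proof.
  intros HK. induction n as [| n IH]; intros HF.
  - exists 0. split; [lra | intros; lia].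
  - destruct IH as [c [Hc Hle]]; [intros i Hi; apply HF; lia |].
    exists (Rmax c (F (S n))). split.
    + split; [apply Rle_trans with c; [lra | apply Rmax_l] |].
      apply Rmax_lub_lt; [lra | apply HF; lia].
    + intros i Hi. destruct (Nat.eq_dec i (S n)) as [-> | Hne]; [apply Rmax_r |].
      apply Rle_trans with c; [apply Hle; lia | apply Rmax_l].
Qed.

Lemma ratio_slack (F G : nat -> R) n : (forall i, (1 <= i <= n)%nat -> 0 < G i) ->
  (forall i, (1 <= i <= n)%nat -> F i / G i < 1 / 2) ->
  exists c, 0 <= c < 1 /\ forall i, (1 <= i <= n)%nat -> F i <= c * G i / 2.
Proof.
  intros HG HF.
  destruct (finite_slack (fun i => F i / G i) (1 / 2) n) as [c [Hc Hle]]; [lra | auto |].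
  exists (2 * c). split; [lra |]. intros i Hi.
  assert (H := Hle i Hi). apply Rle_div_l in H; [lra | apply HG; auto].
Qed.

Theorem mainTheorem1
  (N : nat) (xs : nat -> R) (d : R) (f : R -> R)
  (b : nat -> R -> R) (alpha : nat -> nat -> R -> R)
  (HN : (1 <= N)%nat)
  (Hxs : forall i, (i < N)%nat -> xs i < xs (S i))
  (Hd : 0 < d <= 1)
  (Hf : in_Lipd d (xs 0%nat) (xs N) f)
  (Hb : forall r, in_Lipdf d (xs 0%nat) (xs N) f (b r))
  (Hbnd : exists M, forall r, normd d (xs 0%nat) (xs N) (b r) <= M)
  (Halpha : forall i r, (1 <= i <= N)%nat -> in_Lipd d (xs 0%nat) (xs N) (alpha i r))
  (Hsmall : forall r i, (1 <= i <= N)%nat ->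
     normd d (xs 0%nat) (xs N) (alpha i r) / Rpower (a_coef xs N i) d < 1 / 2) :
  let T := fun r => T_op xs N f (fun i => alpha i r) (b r) in
  (forall r,
     (* (1) well-defined: the branches agree on overlaps, and T maps Lip_{d,f} into itself *)
     (forall g, in_Lipdf d (xs 0%nat) (xs N) f g ->
        (forall i x, (1 <= i <= N)%nat -> inI (xs (i - 1)%nat) (xs i) x ->
           T r g x = T_branch xs N f (fun i => alpha i r) (b r) g i x) /\
        in_Lipdf d (xs 0%nat) (xs N) f (T r g)) /\
     (* (2) contraction w.r.t. ||.||_d *)
     (exists c, 0 <= c < 1 /\
        forall g h, in_Lipdf d (xs 0%nat) (xs N) f g -> in_Lipdf d (xs 0%nat) (xs N) f h ->
          normd d (xs 0%nat) (xs N) (fun x => T r g x - T r h x)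
            <= c * normd d (xs 0%nat) (xs N) (fun x => g x - h x))) /\
  (* (3) unique limit of the forward compositions *)
  (exists fa, in_Lipdf d (xs 0%nat) (xs N) f fa /\
     (forall g, in_Lipdf d (xs 0%nat) (xs N) f g ->
        is_lim_seq (fun r => normd d (xs 0%nat) (xs N) (fun x => Tcomp T r g x - fa x)) 0) /\
     (forall fb, in_Lipdf d (xs 0%nat) (xs N) f fb ->
        (forall g, in_Lipdf d (xs 0%nat) (xs N) f g ->
           is_lim_seq (fun r => normd d (xs 0%nat) (xs N) (fun x => Tcomp T r g x - fb x)) 0) ->
        forall x, inI (xs 0%nat) (xs N) x -> fb x = fa x)).
Proof.
  intros T. destruct Hbnd as [Mb HMb].
  assert (Hslack : forall r, exists c, 0 <= c < 1 /\ forall i, (1 <= i <= N)%nat ->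
            normd d (xs 0%nat) (xs N) (alpha i r) <= c * Rpower (a_coef xs N i) d / 2).
  { intros r. apply ratio_slack; [intros; apply Rpower_gt0 | apply Hsmall]. }
  split.
  - intros r. destruct (Hslack r) as [c [Hc Hal]]. split.
    + intros g Hg. split.
      * intros i x Hi Hx. eapply T_op_branch; eauto.
      * eapply T_op_in_Lipdf; eauto; lra.
    + exists c. split; auto. intros g h Hg Hh. eapply T_op_contraction; eauto; lra.
  - destruct (wfactor_bounds d) as [Hth0 [_ Hth1]]; [lra |].
    apply (forward_limit_exists d _ _ (wfactor d) (3 * (normd d (xs 0%nat) (xs N) f + Mb)));
      auto; try lra.
    + apply x0_le_xN; auto.
    + intros r g Hg. destruct (Hslack r) as [c [Hc Hal]]. eapply T_op_in_Lipdf; eauto; lra.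
    + intros r g h K Hg Hh HK. destruct (Hslack r) as [c [Hc Hal]].
      eapply T_op_wcontraction; eauto; lra.
    + intros r. destruct (Hslack r) as [c [Hc Hal]]. eapply T_op_shift_wbounded; eauto; lra.
Qed.
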